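(* Let $f(r)=r$ and $q_0\notin\Sigma$. For every initial covector $$\lambda_0\in E_1^*:=E_1\setminus(\{K=0\}\cup\{L=0\}\cup\{w_0=0\}),$$ the unit-speed normal trajectory $\gamma(\cdot;\lambda_0)$ from $q_0$ has first conjugate time $t_{\mathrm{con}}=\pi/|w_0|$.
   Context: Consider $\mathbb R^3$ with points $q=(x,y,z)$, $r=\sqrt{x^2+y^2}$, $\Sigma=\{r=0\}$, and $f(r)=r$. Let $q_0=(x_0,y_0,z_0)$ and $r_0=\sqrt{x_0^2+y_0^2}$. Normal trajectories are projections of solutions of $$\dot x=u,\quad \dot y=v,\quad \dot z=r^2w,\quad \dot u=-w^2x,\quad \dot v=-w^2y,\quad \dot w=0,$$ with initial covector $\lambda_0=(u_0,v_0,w_0)$. Energy shell and coordinates: - $E_1=\{\lambda_0:u_0^2+v_0^2+r_0^2w_0^2=1\}$ is the unit energy shell. - $K=x_0v_0-y_0u_0$ and $L=x_0u_0+y_0v_0$. Exponential map and conjugate time: - $\mathrm{Exp}_{q_0}(\lambda_0)=\gamma(1;\lambda_0)$. - $t_{\mathrm{con}}(\gamma)=\inf\{t>0:\mathrm{Exp}_{q_0}\text{ has a critical point at }t\lambda_0\}$. *)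

From Stdlib Require Import Reals ClassicalEpsilon.
From Coquelicot Require Import Coquelicot.
Open Scope R_scope.

(* A curve in the cotangent bundle T*R^3: components x,y,z,u,v,w as functions of time. *)
Record curve6 := Curve6 {
  cx : R -> R; cy : R -> R; cz : R -> R;
  cu : R -> R; cv : R -> R; cw : R -> R }.

Definition zero_curve6 : curve6 :=
  Curve6 (fun _ => 0) (fun _ => 0) (fun _ => 0) (fun _ => 0) (fun _ => 0) (fun _ => 0).

(* Normal Hamiltonian system for f(r) = r (so f(r)^2 = r^2 = x^2 + y^2):
   x' = u, y' = v, z' = r^2 w, u' = -w^2 x, v' = -w^2 y, w' = 0,
   with initial point q0 = (x0,y0,z0) and initial covector l0 = (u0,v0,w0).
   Solutions are required on all of R (they exist globally: the system is linear
   in (x,y,u,v) once w is constant). *)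
Definition is_normal_solution (q0 l0 : R * R * R) (c : curve6) : Prop :=
  let '(x0, y0, z0) := q0 in
  let '(u0, v0, w0) := l0 in
  cx c 0 = x0 /\ cy c 0 = y0 /\ cz c 0 = z0 /\
  cu c 0 = u0 /\ cv c 0 = v0 /\ cw c 0 = w0 /\
  forall t : R,
    is_derive (cx c) t (cu c t) /\
    is_derive (cy c) t (cv c t) /\
    is_derive (cz c) t ((cx c t ^ 2 + cy c t ^ 2) * cw c t) /\
    is_derive (cu c) t (- (cw c t) ^ 2 * cx c t) /\
    is_derive (cv c) t (- (cw c t) ^ 2 * cy c t) /\
    is_derive (cw c) t 0.

Definition normal_lift (q0 l0 : R * R * R) : curve6 :=
  epsilon (inhabits zero_curve6) (is_normal_solution q0 l0).

Definition gamma (q0 l0 : R * R * R) (t : R) : R * R * R :=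
  let c := normal_lift q0 l0 in (cx c t, cy c t, cz c t).

Definition Exp (q0 : R * R * R) (l0 : R * R * R) : R * R * R := gamma q0 l0 1.

Definition critical_point (F : R * R * R -> R * R * R) (p : R * R * R) : Prop :=
  exists l : R * R * R -> R * R * R,
    filterdiff F (locally p) l /\ ~ (forall y, exists x, l x = y).

Definition scal3 (t : R) (l : R * R * R) : R * R * R :=
  let '(a, b, c) := l in (t * a, t * b, t * c).

Definition t_con (q0 l0 : R * R * R) : Rbar :=
  Glb_Rbar (fun t => 0 < t /\ critical_point (Exp q0) (scal3 t l0)).

(* For [w0 <> 0] the normal system is solved explicitly: [(x, y)] is a harmonic
   oscillator of frequency [w0] and [z] is a quadrature, so near every covector with
   [w <> 0] the exponential map is an explicit smooth map.  Its Jacobian determinant is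
   [sin w / w^4] times [jacobian_factor].  On the ray [t l0] the phase is [phi = t w0];
   [sin phi] vanishes at [|phi| = pi], while for [0 < |phi| < pi] the second factor is
   [t^2] times the quadratic form [sin phi A + phi sin phi M + (sin phi - phi cos phi) B]
   in [(A, B, M) = (r0^2 w0^2, u0^2 + v0^2, w0 L)].  The energy gives [A + B = 1], Lagrange's
   identity gives [M^2 <= A B], and the form is positive definite because
   [phi^2 sin phi < 4 (sin phi - phi cos phi)] on [(0, pi)]. *)

From Stdlib Require Import Reals Lra Psatz ClassicalEpsilon.
From Coquelicot Require Import Coquelicot.
Open Scope R_scope.

Lemma is_derive_0_const (f : R -> R) :
  (forall t, is_derive f t 0) -> forall t, f t = f 0.
Proof.
  intros Hf t; destruct (Rtotal_order t 0) as [Hlt | [-> | Hgt]].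
  - now apply (eq_is_derive f t 0).
  - reflexivity.
  - now symmetry; apply (eq_is_derive f 0 t).
Qed.

(* The energy [k (x1 - x2)^2 + (u1 - u2)^2] of the difference is conserved. *)
Lemma oscillator_unique (k : R) (x1 u1 x2 u2 : R -> R) :
  0 < k ->
  (forall t, is_derive x1 t (u1 t)) -> (forall t, is_derive u1 t (- k * x1 t)) ->
  (forall t, is_derive x2 t (u2 t)) -> (forall t, is_derive u2 t (- k * x2 t)) ->
  x1 0 = x2 0 -> u1 0 = u2 0 -> forall t, x1 t = x2 t.
Proof.
  intros Hk Hx1 Hu1 Hx2 Hu2 Ex Eu t.
  set (energy := fun s => k * (x1 s - x2 s) ^ 2 + (u1 s - u2 s) ^ 2).
  assert (Hconst : forall s, is_derive energy s 0).
  { intro s.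
    assert (Hd : is_derive (fun s => x1 s - x2 s) s (u1 s - u2 s))
      by exact (is_derive_minus _ _ _ _ _ (Hx1 s) (Hx2 s)).
    assert (He : is_derive (fun s => u1 s - u2 s) s (- k * x1 s - - k * x2 s))
      by exact (is_derive_minus _ _ _ _ _ (Hu1 s) (Hu2 s)).
    pose proof (is_derive_plus _ _ _ _ _
      (is_derive_scal _ _ k _ (is_derive_pow _ 2 _ _ Hd)) (is_derive_pow _ 2 _ _ He)) as H.
    replace 0 with (plus (k * (INR 2 * (u1 s - u2 s) * (x1 s - x2 s) ^ Nat.pred 2))
      (INR 2 * (- k * x1 s - - k * x2 s) * (u1 s - u2 s) ^ Nat.pred 2))
      by (cbn; unfold plus; cbn; ring).
    exact H. }
  pose proof (is_derive_0_const energy Hconst t) as H0.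
  unfold energy in H0; rewrite Ex, Eu in H0; clear energy Hconst.
  assert (0 <= (x1 t - x2 t) ^ 2) by apply pow2_ge_0.
  assert (0 <= (u1 t - u2 t) ^ 2) by apply pow2_ge_0.
  assert ((x1 t - x2 t) ^ 2 = 0) by nra.
  destruct (Req_dec (x1 t - x2 t) 0) as [E | E]; [lra |].
  now apply (pow_nonzero _ 2) in E.
Qed.

Lemma normal_solution_w (q0 : R * R * R) (u0 v0 w0 : R) (c : curve6) :
  is_normal_solution q0 (u0, v0, w0) c -> forall t, cw c t = w0.
Proof.
  destruct q0 as [[x0 y0] z0].
  intros (_ & _ & _ & _ & _ & Hw0 & Hder) t.
  rewrite <- Hw0; apply is_derive_0_const; intro s; apply Hder.
Qed.

Lemma normal_solution_momentum (q0 : R * R * R) (u0 v0 w0 : R) (c : curve6) :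
  is_normal_solution q0 (u0, v0, w0) c -> forall t,
  is_derive (cu c) t (- w0 ^ 2 * cx c t) /\ is_derive (cv c) t (- w0 ^ 2 * cy c t).
Proof.
  intros H t; rewrite <- (normal_solution_w _ _ _ _ _ H t).
  destruct q0 as [[x0 y0] z0]; destruct H as (_ & _ & _ & _ & _ & _ & D).
  split; apply D.
Qed.

Lemma normal_solution_unique (q0 : R * R * R) (u0 v0 w0 : R) (c1 c2 : curve6) :
  w0 <> 0 -> is_normal_solution q0 (u0, v0, w0) c1 -> is_normal_solution q0 (u0, v0, w0) c2 ->
  forall t, cx c1 t = cx c2 t /\ cy c1 t = cy c2 t /\ cz c1 t = cz c2 t.
Proof.
  intros Hw H1 H2.
  pose proof (normal_solution_w _ _ _ _ _ H1) as W1.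
  pose proof (normal_solution_w _ _ _ _ _ H2) as W2.
  pose proof (normal_solution_momentum _ _ _ _ _ H1) as M1.
  pose proof (normal_solution_momentum _ _ _ _ _ H2) as M2.
  destruct q0 as [[x0 y0] z0].
  destruct H1 as (X1 & Y1 & Z1 & U1 & V1 & _ & D1).
  destruct H2 as (X2 & Y2 & Z2 & U2 & V2 & _ & D2).
  assert (Hk : 0 < w0 ^ 2) by (apply pow2_gt_0; exact Hw).
  assert (Ex : forall t, cx c1 t = cx c2 t).
  { apply (oscillator_unique (w0 ^ 2) _ (cu c1) _ (cu c2)); try congruence;
      intro t; (apply D1 || apply D2 || apply M1 || apply M2). }
  assert (Ey : forall t, cy c1 t = cy c2 t).
  { apply (oscillator_unique (w0 ^ 2) _ (cv c1) _ (cv c2)); try congruence;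
      intro t; (apply D1 || apply D2 || apply M1 || apply M2). }
  assert (Ez : forall t, cz c1 t - cz c2 t = cz c1 0 - cz c2 0).
  { apply (is_derive_0_const (fun t => cz c1 t - cz c2 t)); intro t.
    replace 0 with (minus ((cx c1 t ^ 2 + cy c1 t ^ 2) * cw c1 t)
                          ((cx c2 t ^ 2 + cy c2 t ^ 2) * cw c2 t))
      by (rewrite Ex, Ey, W1, W2; unfold minus, plus, opp; cbn; ring).
    destruct (D1 t) as (_ & _ & Dz1 & _), (D2 t) as (_ & _ & Dz2 & _).
    exact (is_derive_minus _ _ _ _ _ Dz1 Dz2). }
  intro t; split; [| split]; [apply Ex | apply Ey |].
  specialize (Ez t); lra.
Qed.

Definition normal_curve (x0 y0 z0 u0 v0 w0 : R) : curve6 := Curve6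
  (fun t => x0 * cos (w0 * t) + u0 / w0 * sin (w0 * t))
  (fun t => y0 * cos (w0 * t) + v0 / w0 * sin (w0 * t))
  (fun t => z0 + (x0 ^ 2 + y0 ^ 2) * (w0 * t + sin (w0 * t) * cos (w0 * t)) / 2
    + (u0 ^ 2 + v0 ^ 2) * (w0 * t - sin (w0 * t) * cos (w0 * t)) / (2 * w0 ^ 2)
    + (x0 * u0 + y0 * v0) * sin (w0 * t) ^ 2 / w0)
  (fun t => - x0 * w0 * sin (w0 * t) + u0 * cos (w0 * t))
  (fun t => - y0 * w0 * sin (w0 * t) + v0 * cos (w0 * t))
  (fun _ => w0).

Lemma sin2_cos2_pow (x : R) : sin x ^ 2 + cos x ^ 2 = 1.
Proof. rewrite <- !Rsqr_pow2; apply sin2_cos2. Qed.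

Lemma normal_curve_solves (x0 y0 z0 u0 v0 w0 : R) :
  w0 <> 0 -> is_normal_solution (x0, y0, z0) (u0, v0, w0) (normal_curve x0 y0 z0 u0 v0 w0).
Proof.
  intro Hw; unfold is_normal_solution, normal_curve; cbn.
  rewrite Rmult_0_r, sin_0, cos_0.
  do 6 (split; [field; exact Hw |]).
  intro t; split; [| split; [| split; [| split; [| split]]]];
    try (auto_derive; [easy | field; exact Hw]).
  auto_derive; [easy |].
  pose proof (sin2_cos2_pow (w0 * t)) as E.
  set (s := sin (w0 * t)) in *; set (c := cos (w0 * t)) in *; clearbody s c.
  transitivity (((x0 * c + u0 / w0 * s) ^ 2 + (y0 * c + v0 / w0 * s) ^ 2) * w0
    + (1 - s ^ 2 - c ^ 2) * ((x0 ^ 2 + y0 ^ 2) * w0 / 2 + (u0 ^ 2 + v0 ^ 2) / (2 * w0)));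
    [field; exact Hw | replace (1 - s ^ 2 - c ^ 2) with 0 by lra; field; exact Hw].
Qed.

(* [Exp] in closed form, written with [/ _] and products only so that the [gradient]
   tactic below can differentiate it syntactically. *)
Definition exp_x (a : R) (q : R * R * R) : R :=
  a * cos (snd q) + fst (fst q) * / snd q * sin (snd q).
Definition exp_y (b : R) (q : R * R * R) : R :=
  b * cos (snd q) + snd (fst q) * / snd q * sin (snd q).
Definition exp_z (a b z0 : R) (q : R * R * R) : R :=
  z0 + (a * a + b * b) * (snd q + sin (snd q) * cos (snd q)) * / 2
  + (fst (fst q) * fst (fst q) + snd (fst q) * snd (fst q))
    * (snd q - sin (snd q) * cos (snd q)) * / (2 * (snd q * snd q))
  + (a * fst (fst q) + b * snd (fst q)) * (sin (snd q) * sin (snd q)) * / snd q.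

Lemma Exp_eq_formula (a b z0 u v w : R) : w <> 0 ->
  Exp (a, b, z0) (u, v, w) = (exp_x a (u, v, w), exp_y b (u, v, w), exp_z a b z0 (u, v, w)).
Proof.
  intro Hw; unfold Exp, gamma, normal_lift.
  set (c := epsilon _ _).
  assert (Hc : is_normal_solution (a, b, z0) (u, v, w) c).
  { apply epsilon_spec; exists (normal_curve a b z0 u v w); exact (normal_curve_solves _ _ _ _ _ _ Hw). }
  destruct (normal_solution_unique _ _ _ _ _ _ Hw Hc (normal_curve_solves _ _ _ _ _ _ Hw) 1)
    as (-> & -> & ->).
  unfold exp_x, exp_y, exp_z, normal_curve; cbn; rewrite Rmult_1_r.
  f_equal; try f_equal; field; exact Hw.
Qed.

Definition lin3 (gu gv gw : R) (h : R * R * R) : R :=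
  gu * fst (fst h) + gv * snd (fst h) + gw * snd h.

Definition has_gradient (f : R * R * R -> R) (p : R * R * R) (gu gv gw : R) : Prop :=
  filterdiff f (locally p) (lin3 gu gv gw).

Section Gradient.
Variable p : R * R * R.

Lemma has_gradient_u : has_gradient (fun q => fst (fst q)) p 1 0 0.
Proof.
  eapply filterdiff_ext_lin.
  - apply filterdiff_linear, (is_linear_comp (fun t : R * R * R => fst t) (fun t : R * R => fst t));
      [apply is_linear_fst | apply is_linear_fst].
  - intro; unfold lin3; cbn; ring.
Qed.

Lemma has_gradient_v : has_gradient (fun q => snd (fst q)) p 0 1 0.
Proof.
  eapply filterdiff_ext_lin.
  - apply filterdiff_linear, (is_linear_comp (fun t : R * R * R => fst t) (fun t : R * R => snd t));
      [apply is_linear_fst | apply is_linear_snd].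
  - intro; unfold lin3; cbn; ring.
Qed.

Lemma has_gradient_w : has_gradient (fun q => snd q) p 0 0 1.
Proof.
  eapply filterdiff_ext_lin.
  - apply filterdiff_linear, is_linear_snd.
  - intro; unfold lin3; cbn; ring.
Qed.

Lemma has_gradient_const (c : R) : has_gradient (fun _ => c) p 0 0 0.
Proof.
  eapply filterdiff_ext_lin.
  - apply filterdiff_const.
  - intro; unfold lin3; cbn; change (zero = 0 * fst (fst y) + 0 * snd (fst y) + 0 * snd y).
    unfold zero; cbn; ring.
Qed.

Lemma has_gradient_plus f g fu fv fw gu gv gw :
  has_gradient f p fu fv fw -> has_gradient g p gu gv gw ->
  has_gradient (fun q => f q + g q) p (fu + gu) (fv + gv) (fw + gw).
Proof.
  intros Hf Hg; eapply filterdiff_ext_lin.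
  - exact (filterdiff_plus_fct _ _ _ _ Hf Hg).
  - intro; unfold lin3; cbn; ring.
Qed.

Lemma has_gradient_opp f fu fv fw :
  has_gradient f p fu fv fw -> has_gradient (fun q => - f q) p (- fu) (- fv) (- fw).
Proof.
  intro Hf; eapply filterdiff_ext_lin.
  - exact (filterdiff_opp_fct _ _ Hf).
  - intro; unfold lin3; cbn; ring.
Qed.

Lemma has_gradient_minus f g fu fv fw gu gv gw :
  has_gradient f p fu fv fw -> has_gradient g p gu gv gw ->
  has_gradient (fun q => f q - g q) p (fu - gu) (fv - gv) (fw - gw).
Proof. intros Hf Hg; exact (has_gradient_plus _ _ _ _ _ _ _ _ Hf (has_gradient_opp _ _ _ _ Hg)). Qed.

Lemma has_gradient_mult f g fu fv fw gu gv gw :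
  has_gradient f p fu fv fw -> has_gradient g p gu gv gw ->
  has_gradient (fun q => f q * g q) p
    (fu * g p + f p * gu) (fv * g p + f p * gv) (fw * g p + f p * gw).
Proof.
  intros Hf Hg; eapply filterdiff_ext_lin.
  - exact (filterdiff_mult_fct f g p _ _ Rmult_comm Hf Hg).
  - intro; unfold lin3; cbn; ring.
Qed.

Lemma has_gradient_comp (g : R -> R) dg f fu fv fw :
  has_gradient f p fu fv fw -> is_derive g (f p) dg ->
  has_gradient (fun q => g (f q)) p (fu * dg) (fv * dg) (fw * dg).
Proof.
  intros Hf Hg; eapply filterdiff_ext_lin.
  - exact (filterdiff_comp' f g p _ _ Hf Hg).
  - intro; unfold lin3; cbn; ring.
Qed.

Lemma has_gradient_sin f fu fv fw : has_gradient f p fu fv fw ->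
  has_gradient (fun q => sin (f q)) p
    (fu * cos (f p)) (fv * cos (f p)) (fw * cos (f p)).
Proof. intro Hf; apply (has_gradient_comp sin); [exact Hf | apply is_derive_sin]. Qed.

Lemma has_gradient_cos f fu fv fw : has_gradient f p fu fv fw ->
  has_gradient (fun q => cos (f q)) p
    (fu * - sin (f p)) (fv * - sin (f p)) (fw * - sin (f p)).
Proof. intro Hf; apply (has_gradient_comp cos); [exact Hf | apply is_derive_cos]. Qed.

Lemma has_gradient_inv f fu fv fw : f p <> 0 -> has_gradient f p fu fv fw ->
  has_gradient (fun q => / f q) p
    (fu * - / f p ^ 2) (fv * - / f p ^ 2) (fw * - / f p ^ 2).
Proof.
  intros Hp Hf; apply (has_gradient_comp (fun x => / x)); [exact Hf |].
  auto_derive; [exact Hp | field; exact Hp].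
Qed.

Lemma has_gradient_eq f gu gv gw gu' gv' gw' :
  has_gradient f p gu gv gw -> gu = gu' -> gv = gv' -> gw = gw' -> has_gradient f p gu' gv' gw'.
Proof. now intros H -> -> ->. Qed.

End Gradient.

Ltac gradient :=
  lazymatch goal with
  | |- has_gradient (fun q => fst (fst q)) _ _ _ _ => apply has_gradient_u
  | |- has_gradient (fun q => snd (fst q)) _ _ _ _ => apply has_gradient_v
  | |- has_gradient (fun q => snd q) _ _ _ _ => apply has_gradient_w
  | |- has_gradient (fun _ => ?c) _ _ _ _ => apply (has_gradient_const _ c)
  | |- has_gradient (fun q => @?f q + @?g q) _ _ _ _ => eapply (has_gradient_plus _ f g); [gradient | gradient]
  | |- has_gradient (fun q => @?f q - @?g q) _ _ _ _ => eapply (has_gradient_minus _ f g); [gradient | gradient]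
  | |- has_gradient (fun q => @?f q * @?g q) _ _ _ _ => eapply (has_gradient_mult _ f g); [gradient | gradient]
  | |- has_gradient (fun q => - @?f q) _ _ _ _ => eapply (has_gradient_opp _ f); gradient
  | |- has_gradient (fun q => sin (@?f q)) _ _ _ _ => eapply (has_gradient_sin _ f); gradient
  | |- has_gradient (fun q => cos (@?f q)) _ _ _ _ => eapply (has_gradient_cos _ f); gradient
  | |- has_gradient (fun q => / @?f q) _ _ _ _ => eapply (has_gradient_inv _ f); [| gradient]
  end.

Lemma exp_x_gradient (a u v w : R) : w <> 0 ->
  has_gradient (exp_x a) (u, v, w)
    (sin w / w) 0 (- a * sin w + u * (w * cos w - sin w) / w ^ 2).
Proof.
  intro Hw; unfold exp_x; eapply has_gradient_eq; [gradient | ..];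
    cbn [fst snd]; try field; exact Hw.
Qed.

Lemma exp_y_gradient (b u v w : R) : w <> 0 ->
  has_gradient (exp_y b) (u, v, w)
    0 (sin w / w) (- b * sin w + v * (w * cos w - sin w) / w ^ 2).
Proof.
  intro Hw; unfold exp_y; eapply has_gradient_eq; [gradient | ..];
    cbn [fst snd]; try field; exact Hw.
Qed.

Lemma exp_z_gradient (a b z0 u v w : R) : w <> 0 ->
  has_gradient (exp_z a b z0) (u, v, w)
    (u * (w - sin w * cos w) / w ^ 2 + a * sin w ^ 2 / w)
    (v * (w - sin w * cos w) / w ^ 2 + b * sin w ^ 2 / w)
    ((a ^ 2 + b ^ 2) * cos w ^ 2 + (u ^ 2 + v ^ 2) * (sin w ^ 2 * w - w + sin w * cos w) / w ^ 3
      + (a * u + b * v) * (2 * sin w * cos w * w - sin w ^ 2) / w ^ 2).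
Proof.
  intro Hw; unfold exp_z; eapply has_gradient_eq; [gradient | ..]; cbn [fst snd].
  all: try solve [exact Hw | field; exact Hw].
  { apply Rmult_integral_contrapositive; split; [lra | now apply Rmult_integral_contrapositive]. }
  pose proof (sin2_cos2_pow w) as E.
  transitivity ((a ^ 2 + b ^ 2) * cos w ^ 2
    + (u ^ 2 + v ^ 2) * (sin w ^ 2 * w - w + sin w * cos w) / w ^ 3
    + (a * u + b * v) * (2 * sin w * cos w * w - sin w ^ 2) / w ^ 2
    + (1 - sin w ^ 2 - cos w ^ 2) * ((a ^ 2 + b ^ 2) / 2 + (u ^ 2 + v ^ 2) / (2 * w ^ 2)));
    [field; exact Hw | replace (1 - sin w ^ 2 - cos w ^ 2) with 0 by lra; ring].
Qed.

Lemma filterdiff_triple f1 f2 f3 (p : R * R * R) a1 b1 c1 a2 b2 c2 a3 b3 c3 :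
  has_gradient f1 p a1 b1 c1 -> has_gradient f2 p a2 b2 c2 -> has_gradient f3 p a3 b3 c3 ->
  filterdiff (fun q => (f1 q, f2 q, f3 q)) (locally p)
    (fun h => (lin3 a1 b1 c1 h, lin3 a2 b2 c2 h, lin3 a3 b3 c3 h)).
Proof.
  intros H1 H2 H3.
  assert (Hpair : forall (U V : NormedModule R_AbsRing) (x : U * V),
    filterdiff (fun t : prod_NormedModule R_AbsRing U V => (fst t, snd t)) (locally x)
      (fun t : prod_NormedModule R_AbsRing U V => (fst t, snd t))).
  { intros; apply filterdiff_linear, is_linear_prod; [apply is_linear_fst | apply is_linear_snd]. }
  apply (filterdiff_comp'_2 (fun q => (f1 q, f2 q)) f3 pair p
     (fun h => (lin3 a1 b1 c1 h, lin3 a2 b2 c2 h)) _ pair); [| exact H3 | apply Hpair].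
  exact (filterdiff_comp'_2 f1 f2 pair p _ _ pair H1 H2 (Hpair _ _ _)).
Qed.

Lemma filterdiff_directional (F : R * R * R -> R * R * R) p l e (pi : R * R * R -> R) :
  filterdiff F (locally p) l -> is_linear (V := R_NormedModule) pi ->
  is_derive (fun k => pi (F (plus p (scal k e)))) 0 (pi (l e)).
Proof.
  intros HF Hpi.
  assert (Hline : filterdiff (fun k : R_AbsRing => plus p (scal k e)) (locally 0)
                    (fun k => plus zero (scal k e))).
  { apply filterdiff_plus_fct; [apply filterdiff_const | apply filterdiff_scal_l]. }
  assert (HF0 : filterdiff F (locally (plus p (scal (0 : R_AbsRing) e))) l).
  { replace (plus p (scal (0 : R_AbsRing) e)) with p; [exact HF |].
    destruct p as [[p1 p2] p3], e as [[e1 e2] e3].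
    change (plus (p1, p2, p3) (scal (0 : R_AbsRing) (e1, e2, e3))) with (p1 + 0 * e1, p2 + 0 * e2, p3 + 0 * e3).
    now rewrite !Rmult_0_l, !Rplus_0_r. }
  pose proof (filterdiff_comp' _ pi 0 _ pi (filterdiff_comp' _ _ 0 _ _ Hline HF0)
    (filterdiff_linear pi Hpi)) as H.
  eapply filterdiff_ext_lin; [exact H |].
  intro k; simpl; rewrite plus_zero_l.
  destruct HF as [Hl _].
  now rewrite (linear_scal l Hl), (linear_scal pi Hpi).
Qed.

Lemma filterdiff_R3_unique (F : R * R * R -> R * R * R) p l1 l2 :
  filterdiff F (locally p) l1 -> filterdiff F (locally p) l2 -> forall e, l1 e = l2 e.
Proof.
  intros H1 H2 e.
  assert (K : forall pi : R * R * R -> R, is_linear (V := R_NormedModule) pi -> pi (l1 e) = pi (l2 e)).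
  { intros pi Hpi.
    rewrite <- (is_derive_unique _ _ _ (filterdiff_directional F p l1 e pi H1 Hpi)).
    exact (is_derive_unique _ _ _ (filterdiff_directional F p l2 e pi H2 Hpi)). }
  pose proof (K (fun x => fst (fst x)) (is_linear_comp (fun t : R * R * R => fst t)
    (fun t : R * R => fst t) is_linear_fst is_linear_fst)) as K1.
  pose proof (K (fun x => snd (fst x)) (is_linear_comp (fun t : R * R * R => fst t)
    (fun t : R * R => snd t) is_linear_fst is_linear_snd)) as K2.
  pose proof (K snd is_linear_snd) as K3.
  destruct (l1 e) as [[x1 y1] z1], (l2 e) as [[x2 y2] z2]; cbn in *; congruence.
Qed.

Definition block_map (s X Y Zu Zv Zw : R) (h : R * R * R) : R * R * R :=
  (lin3 s 0 X h, lin3 0 s Y h, lin3 Zu Zv Zw h).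

Lemma block_map_surjective_iff (s X Y Zu Zv Zw : R) :
  (forall y, exists h, block_map s X Y Zu Zv Zw h = y) <-> s <> 0 /\ s * Zw - X * Zu - Y * Zv <> 0.
Proof.
  unfold block_map, lin3; split.
  - intro Hsurj.
    assert (Hs : s <> 0).
    { intro Hs0; subst s.
      destruct (Hsurj (1, 0, 0)) as [[[a1 a2] a3] Ha], (Hsurj (0, 1, 0)) as [[[b1 b2] b3] Hb].
      injection Ha; injection Hb; cbn; nra. }
    split; [exact Hs | intro HD].
    destruct (Hsurj (0, 0, 1)) as [[[h1 h2] h3] Hh]; injection Hh; cbn; intros E3 E2 E1.
    apply Hs; transitivity (s * (Zu * h1 + Zv * h2 + Zw * h3)); [rewrite E3; ring |].
    transitivity ((s * Zw - X * Zu - Y * Zv) * h3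
      + Zu * (s * h1 + 0 * h2 + X * h3) + Zv * (0 * h1 + s * h2 + Y * h3)); [ring |].
    rewrite HD, E1, E2; ring.
  - intros [Hs HD] [[y1 y2] y3].
    set (h3 := (s * y3 - Zu * y1 - Zv * y2) / (s * Zw - X * Zu - Y * Zv)).
    exists ((y1 - X * h3) / s, (y2 - Y * h3) / s, h3); cbn.
    f_equal; [f_equal |]; unfold h3; field; tauto.
Qed.

Definition Exp_differential (a b u v w : R) : R * R * R -> R * R * R :=
  block_map (sin w / w)
    (- a * sin w + u * (w * cos w - sin w) / w ^ 2)
    (- b * sin w + v * (w * cos w - sin w) / w ^ 2)
    (u * (w - sin w * cos w) / w ^ 2 + a * sin w ^ 2 / w)
    (v * (w - sin w * cos w) / w ^ 2 + b * sin w ^ 2 / w)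
    ((a ^ 2 + b ^ 2) * cos w ^ 2 + (u ^ 2 + v ^ 2) * (sin w ^ 2 * w - w + sin w * cos w) / w ^ 3
      + (a * u + b * v) * (2 * sin w * cos w * w - sin w ^ 2) / w ^ 2).

Lemma Exp_filterdiff (a b z0 u v w : R) : w <> 0 ->
  filterdiff (Exp (a, b, z0)) (locally (u, v, w)) (Exp_differential a b u v w).
Proof.
  intro Hw.
  apply (filterdiff_ext_locally (fun q => (exp_x a q, exp_y b q, exp_z a b z0 q))).
  - assert (Hpos : 0 < Rabs w) by (apply Rabs_pos_lt; exact Hw).
    exists (mkposreal _ Hpos); intros [[u' v'] w'] [_ Hball].
    change (Rabs (w' + - w) < Rabs w) in Hball.
    assert (w' <> 0) by (intros ->; rewrite Rplus_0_l, Rabs_Ropp in Hball; lra).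
    symmetry; now apply Exp_eq_formula.
  - apply filterdiff_triple;
      [apply exp_x_gradient | apply exp_y_gradient | apply exp_z_gradient]; exact Hw.
Qed.

(* [w^3] times the minor [s Zw - X Zu - Y Zv] of [Exp_differential]. *)
Definition jacobian_factor (a b u v w : R) : R :=
  w ^ 2 * sin w * (a ^ 2 + b ^ 2 + (a * u + b * v)) + (sin w - w * cos w) * (u ^ 2 + v ^ 2).

Lemma Exp_critical_iff (a b z0 u v w : R) : w <> 0 ->
  critical_point (Exp (a, b, z0)) (u, v, w) <-> sin w * jacobian_factor a b u v w = 0.
Proof.
  intro Hw.
  assert (Hminor :
    sin w / w * ((a ^ 2 + b ^ 2) * cos w ^ 2
      + (u ^ 2 + v ^ 2) * (sin w ^ 2 * w - w + sin w * cos w) / w ^ 3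
      + (a * u + b * v) * (2 * sin w * cos w * w - sin w ^ 2) / w ^ 2)
    - (- a * sin w + u * (w * cos w - sin w) / w ^ 2)
      * (u * (w - sin w * cos w) / w ^ 2 + a * sin w ^ 2 / w)
    - (- b * sin w + v * (w * cos w - sin w) / w ^ 2)
      * (v * (w - sin w * cos w) / w ^ 2 + b * sin w ^ 2 / w)
    = jacobian_factor a b u v w / w ^ 3).
  { pose proof (sin2_cos2_pow w) as E; unfold jacobian_factor.
    transitivity ((w ^ 2 * sin w * (a ^ 2 + b ^ 2 + (a * u + b * v))
      + (sin w - w * cos w) * (u ^ 2 + v ^ 2)) / w ^ 3
      + (sin w ^ 2 + cos w ^ 2 - 1) * ((a ^ 2 + b ^ 2) * sin w / w + (u ^ 2 + v ^ 2) * sin w / w ^ 3));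
      [field; exact Hw | rewrite E; ring]. }
  assert (Hsurj : (forall y, exists h, Exp_differential a b u v w h = y)
                  <-> sin w * jacobian_factor a b u v w <> 0).
  { unfold Exp_differential; rewrite block_map_surjective_iff, Hminor.
    assert (Hw3 : / w ^ 3 <> 0) by (apply Rinv_neq_0_compat, pow_nonzero; exact Hw).
    unfold Rdiv; split.
    - intros [Hs Hj] H0; apply Rmult_integral in H0 as [H0 | H0];
        [apply Hs | apply Hj]; rewrite H0; ring.
    - intro H; split; apply Rmult_integral_contrapositive; split;
        try (apply Rinv_neq_0_compat; exact Hw); try exact Hw3;
        intro H0; apply H; rewrite H0; ring. }
  split.
  - intros [l [Hl Hnot]].
    destruct (Req_dec (sin w * jacobian_factor a b u v w) 0) as [| H0]; [assumption | exfalso].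
    apply Hnot; intro y.
    destruct (proj2 Hsurj H0 y) as [h Hh]; exists h.
    rewrite (filterdiff_R3_unique _ _ _ _ Hl (Exp_filterdiff a b z0 u v w Hw)); exact Hh.
  - intro H0; exists (Exp_differential a b u v w); split; [exact (Exp_filterdiff a b z0 u v w Hw) |].
    intro H; exact (proj1 Hsurj H H0).
Qed.

Lemma sin_sub_mul_cos_pos (phi : R) : 0 < phi < PI -> 0 < sin phi - phi * cos phi.
Proof.
  intros [H0 Hpi].
  destruct (MVT_cor2 (fun x => sin x - x * cos x) (fun x => x * sin x) 0 phi H0) as [c [Hc Hcphi]].
  { intros c _; apply is_derive_Reals; auto_derive; [easy | ring]. }
  rewrite sin_0, Rmult_0_l in Hc.
  assert (0 < sin c) by (apply sin_gt_0; lra).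
  assert (0 < c * sin c * (phi - 0)) by (apply Rmult_lt_0_compat; [apply Rmult_lt_0_compat |]; lra).
  lra.
Qed.

Lemma sqr_mul_sin_lt (phi : R) : 0 < phi < PI ->
  phi ^ 2 * sin phi < 4 * (sin phi - phi * cos phi).
Proof.
  intros [H0 Hpi].
  destruct (MVT_cor2 (fun x => 4 * (sin x - x * cos x) - x ^ 2 * sin x)
    (fun x => x * (sin x + (sin x - x * cos x))) 0 phi H0) as [c [Hc Hcphi]].
  { intros c _; apply is_derive_Reals; auto_derive; [easy | ring]. }
  rewrite sin_0 in Hc.
  assert (0 < sin c) by (apply sin_gt_0; lra).
  assert (0 < sin c - c * cos c) by (apply sin_sub_mul_cos_pos; lra).
  assert (0 < c * (sin c + (sin c - c * cos c)) * (phi - 0))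
    by (apply Rmult_lt_0_compat; [apply Rmult_lt_0_compat |]; lra).
  lra.
Qed.

Lemma sin_neq_0_inside (phi : R) : 0 < Rabs phi < PI -> sin phi <> 0.
Proof.
  intro Hphi; destruct (Rle_lt_dec 0 phi).
  - rewrite Rabs_right in Hphi by lra.
    pose proof (sin_gt_0 phi (proj1 Hphi) (proj2 Hphi)); lra.
  - rewrite Rabs_left in Hphi by lra.
    pose proof (sin_gt_0 (- phi) (proj1 Hphi) (proj2 Hphi)); rewrite sin_neg in *; lra.
Qed.

(* By AM-GM, [p A + r B >= 2 sqrt (p r A B) >= 2 sqrt (p r) |M| > |q M|]. *)
Lemma quadratic_form_pos (p q r A B M : R) :
  0 < p -> 0 < r -> q ^ 2 < 4 * p * r ->
  0 <= A -> 0 <= B -> 0 < A + B -> M ^ 2 <= A * B ->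
  0 < p * A + q * M + r * B.
Proof.
  intros Hp Hr Hq HA HB HAB HM.
  assert (Hdiag : 0 < p * A + r * B) by nra.
  destruct (Req_dec M 0) as [-> | HM0]; [lra |].
  assert (Hsq : (q * M) ^ 2 < (p * A + r * B) ^ 2).
  { assert (0 < M ^ 2) by (apply pow2_gt_0; exact HM0).
    assert (q ^ 2 * M ^ 2 < 4 * p * r * M ^ 2) by (apply Rmult_lt_compat_r; assumption).
    assert (4 * p * r * M ^ 2 <= 4 * p * r * (A * B)) by (apply Rmult_le_compat_l; nra).
    assert (0 <= (p * A - r * B) ^ 2) by apply pow2_ge_0.
    replace ((q * M) ^ 2) with (q ^ 2 * M ^ 2) by ring.
    replace ((p * A + r * B) ^ 2) with (4 * p * r * (A * B) + (p * A - r * B) ^ 2) by ring.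
    lra. }
  nra.
Qed.

Lemma phase_form_pos (phi A B M : R) : 0 < phi < PI ->
  0 <= A -> 0 <= B -> 0 < A + B -> M ^ 2 <= A * B ->
  0 < sin phi * A + sin phi * phi * M + (sin phi - phi * cos phi) * B.
Proof.
  intros Hphi HA HB HAB HM.
  assert (Hs : 0 < sin phi) by (apply sin_gt_0; lra).
  apply quadratic_form_pos; try assumption.
  - exact (sin_sub_mul_cos_pos phi Hphi).
  - replace ((sin phi * phi) ^ 2) with (sin phi * (phi ^ 2 * sin phi)) by ring.
    replace (4 * sin phi * (sin phi - phi * cos phi))
      with (sin phi * (4 * (sin phi - phi * cos phi))) by ring.
    apply Rmult_lt_compat_l; [exact Hs | exact (sqr_mul_sin_lt phi Hphi)].
Qed.

Lemma phase_form_neq0 (phi A B M : R) : 0 < Rabs phi < PI ->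
  0 <= A -> 0 <= B -> 0 < A + B -> M ^ 2 <= A * B ->
  sin phi * A + sin phi * phi * M + (sin phi - phi * cos phi) * B <> 0.
Proof.
  intros Hphi HA HB HAB HM.
  destruct (Rle_lt_dec 0 phi) as [Hpos | Hneg].
  - rewrite Rabs_right in Hphi by lra.
    pose proof (phase_form_pos phi A B M Hphi HA HB HAB HM); lra.
  - rewrite Rabs_left in Hphi by lra.
    assert (HM' : (- M) ^ 2 <= A * B) by (replace ((- M) ^ 2) with (M ^ 2) by ring; exact HM).
    pose proof (phase_form_pos (- phi) A B (- M) Hphi HA HB HAB HM') as H.
    rewrite sin_neg, cos_neg in H; lra.
Qed.

Lemma Exp_critical_at_pi (x0 y0 z0 u0 v0 w0 : R) : w0 <> 0 ->
  critical_point (Exp (x0, y0, z0)) (scal3 (PI / Rabs w0) (u0, v0, w0)).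
Proof.
  intro Hw; cbn [scal3].
  assert (Hphase : PI / Rabs w0 * w0 = PI \/ PI / Rabs w0 * w0 = - PI).
  { destruct (Rle_lt_dec 0 w0).
    - left; rewrite Rabs_right by lra; field; exact Hw.
    - right; rewrite Rabs_left by lra; field; exact Hw. }
  apply Exp_critical_iff.
  - destruct Hphase as [-> | ->]; [apply PI_neq0 | apply Ropp_neq_0_compat, PI_neq0].
  - destruct Hphase as [-> | ->]; [rewrite sin_PI | rewrite sin_neg, sin_PI]; ring.
Qed.

(* For a unit covector, [A = r0^2 w0^2], [B = u0^2 + v0^2] and [M = w0 L] satisfy
   [A + B = 1] and, by Lagrange's identity [r0^2 (u0^2 + v0^2) = L^2 + K^2], [M^2 <= A B]. *)
Lemma Exp_not_critical_before_pi (x0 y0 z0 u0 v0 w0 t : R) :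
  u0 ^ 2 + v0 ^ 2 + (x0 ^ 2 + y0 ^ 2) * w0 ^ 2 = 1 -> w0 <> 0 -> 0 < t * Rabs w0 < PI ->
  ~ critical_point (Exp (x0, y0, z0)) (scal3 t (u0, v0, w0)).
Proof.
  intros Henergy Hw Ht; cbn [scal3].
  assert (Hphase : 0 < Rabs (t * w0) < PI).
  { rewrite Rabs_mult, (Rabs_right t); [exact Ht |].
    apply Rle_ge, Rlt_le, (Rmult_lt_reg_r (Rabs w0)); [apply Rabs_pos_lt; exact Hw | lra]. }
  assert (Htw : t * w0 <> 0) by (intro H0; rewrite H0, Rabs_R0 in Hphase; lra).
  assert (Ht0 : t <> 0) by (intro H0; apply Htw; rewrite H0; ring).
  rewrite (Exp_critical_iff _ _ _ _ _ _ Htw).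
  replace (jacobian_factor x0 y0 (t * u0) (t * v0) (t * w0)) with (t ^ 2 *
    (sin (t * w0) * ((x0 ^ 2 + y0 ^ 2) * w0 ^ 2) + sin (t * w0) * (t * w0) * (w0 * (x0 * u0 + y0 * v0))
     + (sin (t * w0) - t * w0 * cos (t * w0)) * (u0 ^ 2 + v0 ^ 2)))
    by (unfold jacobian_factor; ring).
  apply Rmult_integral_contrapositive; split; [exact (sin_neq_0_inside _ Hphase) |].
  apply Rmult_integral_contrapositive; split; [exact (pow_nonzero _ 2 Ht0) |].
  apply phase_form_neq0; [exact Hphase | nra | nra | nra |].
  assert (Hlagrange : (x0 ^ 2 + y0 ^ 2) * (u0 ^ 2 + v0 ^ 2)
                      = (x0 * u0 + y0 * v0) ^ 2 + (x0 * v0 - y0 * u0) ^ 2) by ring.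
  assert (0 <= (x0 * v0 - y0 * u0) ^ 2) by apply pow2_ge_0.
  assert (0 <= w0 ^ 2) by apply pow2_ge_0.
  nra.
Qed.

Theorem corollary12 (x0 y0 z0 u0 v0 w0 : R) :
  x0 ^ 2 + y0 ^ 2 <> 0 ->
  u0 ^ 2 + v0 ^ 2 + (x0 ^ 2 + y0 ^ 2) * w0 ^ 2 = 1 ->
  x0 * v0 - y0 * u0 <> 0 ->
  x0 * u0 + y0 * v0 <> 0 ->
  w0 <> 0 ->
  t_con (x0, y0, z0) (u0, v0, w0) = Finite (PI / Rabs w0).
Proof.
  intros _ Henergy _ _ Hw.
  assert (Haw : 0 < Rabs w0) by (apply Rabs_pos_lt; exact Hw).
  unfold t_con; apply is_glb_Rbar_unique; split.
  - intros t [Ht Hcrit]; cbn.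
    destruct (Rle_lt_dec (PI / Rabs w0) t) as [| Hlt]; [assumption | exfalso].
    apply (Exp_not_critical_before_pi x0 y0 z0 u0 v0 w0 t Henergy Hw); [| exact Hcrit].
    split; [apply Rmult_lt_0_compat; assumption |].
    apply (Rlt_le_trans _ (PI / Rabs w0 * Rabs w0)); [exact (Rmult_lt_compat_r _ _ _ Haw Hlt) |].
    right; field; lra.
  - intros b Hb; apply Hb; split.
    + apply Rdiv_lt_0_compat; [apply PI_RGT_0 | exact Haw].
    + exact (Exp_critical_at_pi x0 y0 z0 u0 v0 w0 Hw).
Qed.
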